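(* Fix $\lambda_s>0,\lambda>0$, $\alpha\in[0,1]$ and constants $0<c_1\le c_2$. For each $n\ge3$ let $\tilde n(n)$ be an integer with $1\le\tilde n(n)\le n$ and $c_1n^\alpha\le\tilde n(n)\le c_2 n^\alpha$. Then there exist $C>0$ and $N$ such that for all $n\ge N$ and every choice of $\tilde n(n)$ distinct jammed links of the ring $R(n)$, the average age $\Delta^{\ell}$ of the jammed ring satisfies $$\Delta^\ell\ge\begin{cases}C\,n^{\alpha}, & \alpha\ge \tfrac12,\\ C\sqrt n, & \alpha<\tfrac12.\end{cases}$$
   Context: Version-age model. A gossip network on a finite node set $\mathcal N$ is specified by source rates $\lambda_{0j}>0$ ($j\in\mathcal N$) and gossip rates $\lambda_{ij}\ge 0$ for ordered pairs $i\neq j$ ($\lambda_{ij}$ is the rate at which node $i$ sends updates to node $j$); $\lambda_s>0$ is the source's update rate. For nonempty $S\subseteq\mathcal N$ let $N(S)=\{i\in\mathcal N\setminus S:\ \sum_{j\in S}\lambda_{ij}>0\}$, and define the version ages recursively by $$\Delta_S=\frac{\lambda_s+\sum_{i\in N(S)}\big(\sum_{j\in S}\lambda_{ij}\big)\Delta_{S\cup\{i\}}}{\sum_{j\in S}\lambda_{0j}+\sum_{i\in N(S)}\sum_{j\in S}\lambda_{ij}}$$ (well defined by downward induction on $|S|$); $\Delta_i=\Delta_{\{i\}}$. Ring $R(n)$: nodes $\{1,\dots,n\}$, $\lambda_{0j}=\lambda/n$, and for each of the $n$ ring links $\{i,i+1\}$ (indices mod $n$) $\lambda_{i,i+1}=\lambda_{i+1,i}=\lambda/2$;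 all other rates $0$. Jamming $\tilde n$ distinct ring links means setting both rates of each of these links to $0$ (the ring then splits into $\tilde n$ line segments). The average age of the jammed ring is $\Delta^\ell=\frac1n\sum_{i=1}^n\Delta_i$ computed in the jammed network. *)

From HB Require Import structures.
From mathcomp Require Import all_boot all_order all_algebra.
From mathcomp Require Import all_classical all_reals all_analysis.
Set Implicit Arguments. Unset Strict Implicit. Unset Printing Implicit Defensive.
Import Order.TTheory GRing.Theory Num.Theory.
Local Open Scope ring_scope.

Section VersionAge.
Variables (R : realType) (T : finType).
(* lam0 j = source rate to j; lam i j = gossip rate from i to j; ls = source update rate *)
Variables (lam0 : T -> R) (lam : T -> T -> R) (ls : R).

Definition nbr (S : {set T}) : {set T} :=
  [set i | (i \notin S) && (0 < \sum_(j in S) lam i j)].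

(* fuel-indexed unfolding of the recursion; fuel = #|T| - #|S| *)
Fixpoint ageF (k : nat) (S : {set T}) : R :=
  match k with
  | 0 => ls / (\sum_(j in S) lam0 j) (* only reached when S = T, where N(S) is empty *)
  | k.+1 => (ls + \sum_(i in nbr S) (\sum_(j in S) lam i j) * ageF k (i |: S))
            / (\sum_(j in S) lam0 j + \sum_(i in nbr S) \sum_(j in S) lam i j)
  end.

Definition version_age (S : {set T}) : R := ageF (#|T| - #|S|) S.
End VersionAge.

(* Ring R(n) on nodes 'I_n; link i is {i, i+1 mod n}; J = set of jammed links *)
Definition ring_lam0 (R : realType) (n : nat) (l : R) : 'I_n -> R :=
  fun _ => l / n%:R.

Definition jammed_ring_lam (R : realType) (n : nat) (l : R) (J : {set 'I_n})
  : 'I_n -> 'I_n -> R :=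
  fun i j =>
    if (j == ordS i) && (i \notin J) then l / 2
    else if (i == ordS j) && (j \notin J) then l / 2
    else 0.

Definition jammed_ring_avg_age (R : realType) (n : nat) (ls l : R) (J : {set 'I_n}) : R :=
  n%:R^-1 * \sum_(i < n) version_age (@ring_lam0 R n l) (jammed_ring_lam l J) ls [set i].

From HB Require Import structures.
From mathcomp Require Import all_boot all_order all_algebra.
From mathcomp Require Import all_classical all_reals all_analysis.
From mathcomp Require Import ring lra.
Import Order.TTheory GRing.Theory Num.Theory.
Set Implicit Arguments. Unset Strict Implicit. Unset Printing Implicit Defensive.
Local Open Scope ring_scope.

(* The version age of a set S is given by a recursion over the sets S u {i}
   obtained by absorbing a neighbour i.  Section AgeRecursion turns this
   recursion into an induction principle (version_age_lb): any bound that is a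
   subsolution of one recursion step on an invariant family of sets lies below
   the version age.  Two instances follow, valid for arbitrary rates:
   - closed_set_age_lb: a set receiving no gossip from outside only learns from
     the source, so its subsets are at least as old as ls / (source rate);
   - uniform_source_age_lb: with a uniform source rate c and an inflow bounded
     by L, a set of size k is at least as old as ls / (2 L) * (K - k)_+ with
     c K^2 <= L.
   For the jammed ring R(n) (rates 0 or l / 2, inflow of every grown set at
   most l) these give two bounds on the average age: ls / l times the number
   of jammed links, since the ring splits into that many closed segments, and
   ls / (4 l) times sqrt n.  Theorem theorem3 uses the first one when
   alpha >= 1/2 (as #|J| >= c1 n^alpha) and the second one otherwise. *)

Lemma sum_subset_le (R : numDomainType) (T : finType) (A B : {set T}) (F : T -> R) :
  (forall x, 0 <= F x) -> A \subset B -> \sum_(x in A) F x <= \sum_(x in B) F x.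
Proof.
move=> F_ge0 AB; rewrite [X in _ <= X](big_setID A) /= (finset.setIidPr AB) lerDl.
exact: sumr_ge0.
Qed.

Definition shortfall (R : realFieldType) (K : R) (k : nat) : R :=
  if k%:R <= K then K - k%:R else 0.

Section Shortfall.
Variables (R : realFieldType) (K : R).

Lemma shortfall_lb k : K - k%:R <= shortfall K k.
Proof. by rewrite /shortfall; case: ifP => // /negbT; rewrite -ltNge subr_le0 => /ltW. Qed.

Lemma shortfall_succ k : shortfall K k <= shortfall K k.+1 + 1.
Proof.
rewrite /shortfall -natr1; case: ifP => k_le; case: ifP => k1_le; lra.
Qed.

Lemma shortfall_mul k : shortfall K k * k%:R <= K ^+ 2.
Proof.
rewrite /shortfall; case: ifP => [k_le | _]; last by rewrite mul0r sqr_ge0.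
have k_ge0 : 0 <= k%:R :> R := ler0n R k.
nra.
Qed.
End Shortfall.

Section AgeRecursion.
Variables (R : realType) (T : finType) (lam0 : T -> R) (lam : T -> T -> R) (ls : R).
Hypotheses (lam0_gt0 : forall j, 0 < lam0 j) (lam_ge0 : forall i j, 0 <= lam i j)
  (ls_ge0 : 0 <= ls).

Definition inrate (S : {set T}) (i : T) : R := \sum_(j in S) lam i j.

Definition nbr_rate (S : {set T}) : R := \sum_(i in nbr lam S) inrate S i.

Definition inflow (S : {set T}) : R := \sum_(x in ~: S) inrate S x.

(* One step of the version-age recursion at S, where a i stands for the age of i |: S. *)
Definition age_step (S : {set T}) (a : T -> R) : R :=
  (ls + \sum_(i in nbr lam S) inrate S i * a i) / (\sum_(j in S) lam0 j + nbr_rate S).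

Lemma inrate_ge0 S i : 0 <= inrate S i.
Proof. exact: sumr_ge0. Qed.

Lemma nbr_rate_ge0 S : 0 <= nbr_rate S.
Proof. by apply: sumr_ge0 => i _; apply: inrate_ge0. Qed.

Lemma nbr_notin S i : i \in nbr lam S -> i \notin S.
Proof. by rewrite inE => /andP[]. Qed.

Lemma nbr_rate_le_inflow S : nbr_rate S <= inflow S.
Proof.
apply: sum_subset_le; first exact: inrate_ge0.
by apply/fintype.subsetP => i /nbr_notin; rewrite inE.
Qed.

Lemma age_step_mono S (a b : T -> R) :
  (forall i, i \in nbr lam S -> a i <= b i) -> age_step S a <= age_step S b.
Proof.
move=> ab; rewrite /age_step; apply: ler_wpM2r.
  rewrite invr_ge0 addr_ge0 ?nbr_rate_ge0 //.
  by apply: sumr_ge0 => j _; apply: ltW.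
by rewrite lerD2l; apply: ler_sum => i /ab; apply: ler_wpM2l; apply: inrate_ge0.
Qed.

Lemma age_step_const S (a : T -> R) x :
  (forall i, i \in nbr lam S -> a i = x) ->
  age_step S a = (ls + nbr_rate S * x) / (\sum_(j in S) lam0 j + nbr_rate S).
Proof.
move=> ax; rewrite /age_step /nbr_rate mulr_suml.
by congr ((_ + _) / _); apply: eq_bigr => i /ax ->.
Qed.

Lemma version_age_lb (P : {set T} -> Prop) (B : {set T} -> R) :
  (forall S i, P S -> i \in nbr lam S -> P (i |: S)) ->
  (forall S, P S -> B S <= age_step S (fun i => B (i |: S))) ->
  forall S, P S -> B S <= version_age lam0 lam ls S.
Proof.
move=> P_nbr B_step S PS; rewrite /version_age.
suff: forall k S, P S -> k = (#|T| - #|S|)%N -> B S <= ageF lam0 lam ls k S by apply.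
elim=> [|k IH] {}S {}PS fuelS.
- have S_full : S = [set: T].
    apply/eqP; rewrite eqEcard finset.subsetT finset.cardsT /=.
    by move/esym/eqP: fuelS; rewrite subn_eq0.
  have nbr0 : nbr lam S = finset.set0.
    by apply/setP => i; rewrite !inE S_full finset.in_setT.
  apply: le_trans (B_step S PS) _.
  by rewrite /age_step /nbr_rate nbr0 !big_set0 !addr0.
- apply: le_trans (B_step S PS) (age_step_mono _) => i i_nbr; apply: IH; first exact: P_nbr.
  by rewrite cardsU1 (negbTE (nbr_notin i_nbr)) add1n subnS -fuelS.
Qed.

Lemma source_rate_gt0 S : S != finset.set0 -> 0 < \sum_(j in S) lam0 j.
Proof.
case/set0Pn => x xS; rewrite (bigD1 x) //= ltr_pwDl //.
by apply: sumr_ge0 => j _; apply: ltW.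
Qed.

(* If no gossip enters A from outside, every nonempty S inside A only learns
   from the source, hence is at least as old as ls / (source rate of A). *)
Lemma closed_set_age_lb (A : {set T}) :
  (forall x y, x \notin A -> y \in A -> lam x y = 0) ->
  forall S, S != finset.set0 -> S \subset A ->
  ls / \sum_(j in A) lam0 j <= version_age lam0 lam ls S.
Proof.
move=> A_closed S0 S0_ne S0_A.
apply: (version_age_lb (P := fun S => S != finset.set0 /\ S \subset A)) => //.
- move=> S i [_ SA] i_nbr; split; first by apply/set0Pn; exists i; rewrite setU11.
  rewrite finset.subUset SA andbT finset.sub1set; apply: contraLR i_nbr => iA.
  rewrite inE negb_and -leNgt orbC big1 ?lexx // => j jS.
  exact: A_closed iA (fintype.subsetP SA j jS).
- move=> S [S_ne SA]; rewrite (age_step_const (x := ls / \sum_(j in A) lam0 j)) //.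
  set M := \sum_(j in A) lam0 j; set s := \sum_(j in S) lam0 j.
  have s_gt0 : 0 < s by apply: source_rate_gt0.
  have sM : s <= M by apply: sum_subset_le => // j; apply: ltW.
  have w_ge0 := nbr_rate_ge0 S.
  have M_gt0 : 0 < M := lt_le_trans s_gt0 sM.
  rewrite ler_pdivlMr ?ltr_wpDr // mulrDr [_ * nbr_rate S]mulrC lerD2r.
  rewrite -[leRHS](divfK (lt0r_neq0 M_gt0)); apply: ler_wpM2l => //.
  exact: divr_ge0 ls_ge0 (ltW M_gt0).
Qed.

Lemma uniform_source_age_lb (c L K : R) (P : {set T} -> Prop) :
  (forall j, lam0 j = c) -> 0 < L -> c * K ^+ 2 <= L ->
  (forall S i, P S -> i \in nbr lam S -> P (i |: S)) ->
  (forall S, P S -> S != finset.set0 /\ inflow S <= L) ->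
  forall S, P S -> ls / (2 * L) * shortfall K #|S| <= version_age lam0 lam ls S.
Proof.
move=> lam0_c L_gt0 cK P_nbr P_inflow.
apply: version_age_lb => // S PS; have [S_ne inflowS] := P_inflow S PS.
set u := ls / (2 * L); set k := #|S|; set w := nbr_rate S.
rewrite (age_step_const (x := u * shortfall K k.+1)); last first.
  by move=> i i_nbr; rewrite cardsU1 (negbTE (nbr_notin i_nbr)).
have s_gt0 := source_rate_gt0 S_ne.
have s_eq : \sum_(j in S) lam0 j = k%:R * c.
  by under eq_bigr do rewrite lam0_c; rewrite sumr_const mulr_natl.
have c_ge0 : 0 <= c by case/set0Pn: S_ne => x _; rewrite -(lam0_c x) ltW.
have u_ge0 : 0 <= u by rewrite divr_ge0 // mulr_ge0 // ltW.
have u2L : u * (2 * L) = ls by rewrite divfK // mulf_neq0 // lt0r_neq0.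
have w_ge0 : 0 <= w := nbr_rate_ge0 S.
have wL : w <= L := le_trans (nbr_rate_le_inflow S) inflowS.
clearbody u.
have source_part : shortfall K k * (k%:R * c) <= L.
  rewrite mulrA mulrC; apply: (le_trans _ cK).
  by apply: ler_wpM2l => //; exact: shortfall_mul.
have gossip_part : shortfall K k * w <= shortfall K k.+1 * w + L.
  apply: le_trans (_ : (shortfall K k.+1 + 1) * w <= _).
    by apply: ler_wpM2r => //; exact: shortfall_succ.
  by rewrite mulrDl mul1r lerD2l.
have total : shortfall K k * (k%:R * c + w) <= 2 * L + w * shortfall K k.+1.
  by rewrite mulrDr [w * _]mulrC; lra.
rewrite ler_pdivlMr ?ltr_wpDr // s_eq -u2L -mulrA [X in _ <= _ + X]mulrCA -mulrDr.
exact: ler_wpM2l.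
Qed.
End AgeRecursion.

Section JammedRates.
Variables (R : realType) (n : nat) (l : R) (J : {set 'I_n}).
Hypothesis l_gt0 : 0 < l.
Local Notation lamJ := (jammed_ring_lam l J).

Lemma jam_rate_cases x y : lamJ x y = 0 \/ lamJ x y = l / 2.
Proof. by rewrite /jammed_ring_lam; case: ifP => _; [right | case: ifP => _; [right | left]]. Qed.

Lemma jam_rate_ge0 x y : 0 <= lamJ x y.
Proof. by case: (jam_rate_cases x y) => ->; rewrite ?divr_ge0 // ltW. Qed.

Lemma jam_rate_sym x y : lamJ x y = lamJ y x.
Proof.
rewrite /jammed_ring_lam.
by case: ((y == ordS x) && (x \notin J)); case: ((x == ordS y) && (y \notin J)).
Qed.

(* Node x only hears from its two ring neighbours, each at rate at most l / 2. *)
Lemma jam_rate_into_le x : \sum_y lamJ y x <= l.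
Proof.
have l_ge0 : 0 <= l := ltW l_gt0.
have neighbours y : lamJ y x <= l / 2 * (y == ord_pred x)%:R + l / 2 * (y == ordS x)%:R.
  rewrite /jammed_ring_lam.
  case: ifP => [/andP[/eqP -> _] | _].
    by rewrite ordSK eqxx; case: (_ == _) => /=; lra.
  case: ifP => [/andP[/eqP -> _] | _]; first by rewrite eqxx; case: (_ == _) => /=; lra.
  by case: (_ == _); case: (_ == _) => /=; lra.
have indicator (a : 'I_n) : \sum_y ((y == a)%:R : R) = 1.
  by rewrite (bigD1 a) //= eqxx big1 ?addr0 // => y /negbTE ->.
apply: le_trans (ler_sum _ (fun y _ => neighbours y)) _.
by rewrite big_split /= -!mulr_sumr !indicator; lra.
Qed.

(* Rates are 0 or l / 2, so a positive rate into a set is at least l / 2. *)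
Lemma jam_inrate_gap S i : 0 < inrate lamJ S i -> l / 2 <= inrate lamJ S i.
Proof.
move=> pos; have [j /andP[jS nz] | none] := pickP [pred j in S | lamJ i j != 0].
  have -> : l / 2 = lamJ i j by case: (jam_rate_cases i j) nz => ->; rewrite ?eqxx.
  rewrite /inrate (bigD1 j) //= lerDl; apply: sumr_ge0 => k _; exact: jam_rate_ge0.
move: pos; rewrite /inrate big1 ?ltxx // => k kS.
by move: (none k); rewrite /= kS => /negbFE/eqP.
Qed.

Lemma jam_inflow_set1 i : inflow lamJ [set i] <= l.
Proof.
rewrite /inflow /inrate; under eq_bigr do rewrite big_set1.
apply: le_trans (jam_rate_into_le i).
rewrite [X in _ <= X](bigID (mem (~: [set i]))) /= lerDl.
by apply: sumr_ge0 => y _; exact: jam_rate_ge0.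
Qed.

(* Absorbing a neighbour i does not increase the inflow: at least l / 2 of the
   old inflow came from i, and i brings in at most l - l / 2 new inflow. *)
Lemma jam_inflow_nbr S i : i \in nbr lamJ S -> inflow lamJ (i |: S) <= inflow lamJ S.
Proof.
move=> i_nbr; have iS := nbr_notin i_nbr.
set a := inrate lamJ S i.
have a_gap : l / 2 <= a by apply: jam_inrate_gap; move: i_nbr; rewrite inE => /andP[].
set rest := \sum_(x in ~: (i |: S)) inrate lamJ S x.
have old : inflow lamJ S = a + rest.
  rewrite /inflow (bigD1 i) /=; last by rewrite inE.
  by congr (_ + _); apply: eq_bigl => x; rewrite !inE negb_or andbC.
have new : inflow lamJ (i |: S) = rest + \sum_(x in ~: (i |: S)) lamJ x i.
  rewrite /inflow /rest -big_split /=; apply: eq_bigr => x _.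
  by rewrite /inrate big_setU1 //= addrC.
have into_i : \sum_(x in ~: (i |: S)) lamJ x i + a <= l.
  apply: le_trans (jam_rate_into_le i).
  rewrite [X in _ <= X](bigID (mem (~: (i |: S)))) /= lerD2l.
  have -> : a = \sum_(x in S) lamJ x i by apply: eq_bigr => x _; rewrite jam_rate_sym.
  rewrite [X in _ <= X](eq_bigl (mem (i |: S))); last by move=> x; rewrite /= inE negbK.
  by rewrite big_setU1 //= lerDr; exact: jam_rate_ge0.
rewrite old new; lra.
Qed.
End JammedRates.

Lemma iter_ordS n (i : 'I_n) k : val (iter k (@ordS n) i) = ((i + k) %% n)%N.
Proof.
elim: k => [|k IH] /=; first by rewrite addn0 modn_small.
by rewrite IH addnS -[((_ %% n).+1)%N]addn1 modnDml addn1.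
Qed.

Section Segments.
Variables (n : nat) (J : {set 'I_n}) (j0 : 'I_n).
Hypothesis j0J : j0 \in J.

Lemma jammed_link_ahead i : exists k, iter k (@ordS n) i \in J.
Proof.
exists (j0 + n - i)%N; suff -> : iter (j0 + n - i) (@ordS n) i = j0 by [].
apply: val_inj; rewrite iter_ordS subnKC ?modnDr ?modn_small //.
exact: leq_trans (ltnW (ltn_ord i)) (leq_addl _ _).
Qed.

(* The first jammed link at or after i; the line segment containing i ends there. *)
Definition segment_end i : 'I_n := iter (ex_minn (jammed_link_ahead i)) (@ordS n) i.

Lemma segment_end_in i : segment_end i \in J.
Proof. by rewrite /segment_end; case: ex_minnP. Qed.

Lemma segment_end_id j : j \in J -> segment_end j = j.
Proof.
move=> jJ; rewrite /segment_end; case: ex_minnP => m _ m_min.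
by move: (m_min 0%N jJ); rewrite leqn0 => /eqP ->.
Qed.

Lemma segment_end_ordS i : i \notin J -> segment_end (ordS i) = segment_end i.
Proof.
move=> iJ; rewrite /segment_end.
case: ex_minnP => m' Pm' m'_min; case: ex_minnP => [[|m] Pm m_min].
  by rewrite /= (negbTE iJ) in Pm.
have m'_eq : m' = m.
  by apply/eqP; rewrite eqn_leq m'_min -?iterSr // -ltnS m_min // iterSr.
by rewrite m'_eq iterSr.
Qed.

Lemma segment_end_rate (R : realType) (l : R) x y :
  jammed_ring_lam l J x y != 0 -> segment_end x = segment_end y.
Proof.
rewrite /jammed_ring_lam.
case: ifP => [/andP[/eqP -> xJ] _ | _]; first by rewrite segment_end_ordS.
case: ifP => [/andP[/eqP -> yJ] _ | _]; first by rewrite segment_end_ordS.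
by rewrite eqxx.
Qed.
End Segments.

Lemma sum_inv_fibre_card (R : numFieldType) (T : finType) (J : {set T}) (r : T -> T) :
  (forall i, r i \in J) -> (forall j, j \in J -> r j = j) ->
  \sum_i (#|[set y | r y == r i]|%:R : R)^-1 = #|J|%:R.
Proof.
move=> r_in r_id; rewrite (partition_big r (mem J)) //=.
transitivity (\sum_(j in J) (1 : R)); last by rewrite sumr_const.
apply: eq_bigr => j jJ; set F := [set y | r y == j].
rewrite (eq_bigr (fun _ => (#|F|%:R : R)^-1)); last by move=> i /eqP ->.
rewrite sumr_const (eq_card (B := F)); last by move=> y; rewrite inE.
have F_gt0 : (0 < #|F|)%N by apply/card_gt0P; exists j; rewrite inE r_id.
by rewrite -[_ *+ #|F|]mulr_natr mulVf // pnatr_eq0 -lt0n.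
Qed.

Section AverageAge.
Variables (R : realType) (n : nat) (ls l : R) (J : {set 'I_n}).
Hypotheses (ls_gt0 : 0 < ls) (l_gt0 : 0 < l).
Local Notation lam0R := (@ring_lam0 R n l).
Local Notation lamJ := (jammed_ring_lam l J).
Local Notation age i := (version_age lam0R lamJ ls [set i]).

Lemma ring_lam0_gt0 (j : 'I_n) : 0 < lam0R j.
Proof. by rewrite /ring_lam0 divr_gt0 // ltr0n (leq_ltn_trans _ (ltn_ord j)). Qed.

Lemma avg_age_ge (f : 'I_n -> R) :
  (forall i, f i <= age i) -> n%:R^-1 * \sum_i f i <= jammed_ring_avg_age ls l J.
Proof.
by move=> f_le; apply: ler_wpM2l; [rewrite invr_ge0 ler0n | apply: ler_sum => i _].
Qed.

(* Each segment of size m only gets updates from the source, at rate m l / n, so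
   its nodes have age at least ls n / (m l); averaging over the #|J| segments
   gives ls / l per jammed link. *)
Lemma avg_age_ge_links : J != finset.set0 -> ls / l * #|J|%:R <= jammed_ring_avg_age ls l J.
Proof.
case/set0Pn => j0 j0J.
have n_gt0 : 0 < n%:R :> R by rewrite ltr0n (leq_ltn_trans _ (ltn_ord j0)).
pose seg i := [set y | segment_end j0J y == segment_end j0J i].
have age_lb i : ls / l * n%:R * (#|seg i|%:R)^-1 <= age i.
  have seg_gt0 : 0 < #|seg i|%:R :> R by rewrite ltr0n; apply/card_gt0P; exists i; rewrite inE.
  have seg_rate : \sum_(j in seg i) lam0R j = #|seg i|%:R * (l / n%:R).
    by rewrite sumr_const mulr_natl.
  have -> : ls / l * n%:R * (#|seg i|%:R)^-1 = ls / \sum_(j in seg i) lam0R j.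
    by rewrite seg_rate; field; rewrite !gt_eqF.
  apply: (closed_set_age_lb ring_lam0_gt0 (jam_rate_ge0 J l_gt0) (ltW ls_gt0)).
  - move=> x y x_out y_in; apply/eqP; apply: contraNT x_out => /(segment_end_rate j0J) xy.
    by rewrite inE xy; rewrite inE in y_in.
  - by apply/set0Pn; exists i; rewrite set11.
  - by rewrite finset.sub1set inE.
apply: le_trans (avg_age_ge age_lb).
rewrite -mulr_sumr (sum_inv_fibre_card R (segment_end_in j0J) (segment_end_id j0J)).
suff -> : n%:R^-1 * (ls / l * n%:R * #|J|%:R) = ls / l * #|J|%:R by [].
by rewrite -[ls / l * _ * _]mulrA mulrCA mulKf ?gt_eqF.
Qed.

(* With source rate l / n per node and inflow at most l, a singleton keeps an
   age of order ls / l times sqrt n: its set must grow to size ~ sqrt n. *)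
Lemma avg_age_ge_sqrt : (4 <= n)%N -> ls / l / 4 * Num.sqrt n%:R <= jammed_ring_avg_age ls l J.
Proof.
move=> n_ge4.
have n_gt0 : 0 < n%:R :> R by rewrite ltr0n (leq_trans _ n_ge4).
have n4 : 4 <= n%:R :> R by rewrite (ler_nat R 4).
set K := Num.sqrt n%:R.
have Kn : K ^+ 2 = n%:R by rewrite sqr_sqrtr // ltW.
have K_ge0 : 0 <= K := sqrtr_ge0 _.
have K2 : 2 <= K by rewrite -Kn in n4; nra.
have age_lb (i : 'I_n) : ls / (2 * l) * shortfall K 1 <= age i.
  have uniform_lb := uniform_source_age_lb ring_lam0_gt0 (jam_rate_ge0 J l_gt0) (ltW ls_gt0)
    (c := l / n%:R) (L := l) (K := K) (P := fun S => S != finset.set0 /\ inflow lamJ S <= l).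
  have cK : l / n%:R * K ^+ 2 <= l by rewrite Kn divfK ?gt_eqF.
  have P_nbr S j : S != finset.set0 /\ inflow lamJ S <= l -> j \in nbr lamJ S ->
      j |: S != finset.set0 /\ inflow lamJ (j |: S) <= l.
    move=> [_ inflowS] j_nbr; split; first by apply/set0Pn; exists j; rewrite setU11.
    exact: le_trans (jam_inflow_nbr l_gt0 j_nbr) inflowS.
  have P_i : [set i] != finset.set0 /\ inflow lamJ [set i] <= l.
    by split; [apply/set0Pn; exists i; rewrite set11 | exact: jam_inflow_set1].
  by have := uniform_lb (fun _ => erefl) l_gt0 cK P_nbr (fun _ => id) _ P_i; rewrite cards1.
apply: le_trans (avg_age_ge age_lb).
rewrite sumr_const card_ord -[ls / (2 * l) * _ *+ n]mulr_natl mulKf ?gt_eqF //.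
have lsl_gt0 : 0 < ls / l by rewrite divr_gt0.
have half_ge0 : 0 <= ls / (2 * l) by rewrite divr_ge0 ?mulr_ge0 // ltW.
apply: le_trans (ler_wpM2l half_ge0 (shortfall_lb K 1)).
have -> : ls / (2 * l) * (K - 1%:R) = ls / l * ((K - 1) / 2) by field; rewrite gt_eqF.
rewrite -mulrA ler_pM2l //; lra.
Qed.
End AverageAge.

Theorem theorem3 (R : realType) (ls l alpha c1 c2 : R) (nt : nat -> nat) :
  0 < ls -> 0 < l -> 0 <= alpha <= 1 -> 0 < c1 -> c1 <= c2 ->
  (forall n : nat, (3 <= n)%N ->
     [/\ (1 <= nt n)%N, (nt n <= n)%N,
         c1 * (n%:R `^ alpha) <= (nt n)%:R & (nt n)%:R <= c2 * (n%:R `^ alpha)]) ->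
  exists C : R, 0 < C /\ exists N : nat, forall n : nat, (N <= n)%N ->
    forall J : {set 'I_n}, #|J| = nt n ->
      (if 1 / 2 <= alpha then C * (n%:R `^ alpha) else C * Num.sqrt (n%:R))
        <= @jammed_ring_avg_age R n ls l J.
Proof.
move=> ls_gt0 l_gt0 _ c1_gt0 _ nt_bounds.
have lsl_gt0 : 0 < ls / l by rewrite divr_gt0.
exists (if 1 / 2 <= alpha then ls / l * c1 else ls / l / 4); split.
  by case: ifP => _; [exact: mulr_gt0 | exact: divr_gt0].
exists 4%N => n n_ge4 J card_J.
have [nt_ge1 _ nt_lb _] := nt_bounds n (leq_trans (isT : (3 <= 4)%N) n_ge4).
case: ifP => alpha_large; rewrite alpha_large; last exact: avg_age_ge_sqrt.
have J_ne : J != finset.set0 by rewrite -card_gt0 card_J.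
apply: le_trans (avg_age_ge_links ls_gt0 l_gt0 J_ne).
rewrite card_J -mulrA; apply: ler_wpM2l => //; exact: ltW.
Qed.
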